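(* Suppose that either (1) the cost function $C$ is submodular and all valuations are supermodular, or (2) $C$ is submodular and player-wise symmetric and all valuations are symmetric. Then the Sequential Mechanism is groupstrategyproof, $1$-budget-balanced (i.e. $\sum_ip_i=C(\overrightarrow{ALG})$), is an $n$-approximation to the social cost, and satisfies individual rationality and no positive transfers.
   Context: Setting. $N=\{1,\dots,n\}$ is a set of players and $M_1,\dots,M_n$ are pairwise disjoint finite sets; $M=\bigcup_i M_i$; allocations $\vec S=(S_1,\dots,S_n)$ with $S_i\subseteq M_i$ are identified with subsets of $M$, with componentwise set operations. A cost function is a monotone $C:2^M\to\mathbb{R}_{\ge0}$ with $C(\emptyset)=0$; valuations $v_i:2^{M_i}\to\mathbb{R}_{\ge0}$ are monotone with $v_i(\emptyset)=0$. Sequential Mechanism: start with $ALG_i=\emptyset$ for all $i$. For $i=1,\dots,n$ in order: let $\mathcal A_i=\arg\max_{S\subseteq M_i}v_i(S)-[C(\overrightarrow{ALG}\cup S)-C(\overrightarrow{ALG})]$ (with $\overrightarrow{ALG}$ the current allocation, in which only players $1,\dots,i-1$ have been assigned), set $ALG_i$ to an element of $\mathcal A_i$ of maximum cardinality, and charge $p_i=C(ALG_1,\dots,ALG_i)-C(ALG_1,\dots,ALG_{i-1})$. Groupstrategyproof: for every $K\subseteq N$ and every joint misreport by $K$ (other players reporting truthfully), if $v_i(S_i)-p_i\le v_i(S'_i)-p'_i$ for all $i\in K$ then equality holds for all $i\in K$, where $(\vec S,\vec p)$ and $(\vec S',\vec p')$ are the outputs under truthful reports and under the misreport. Individual rationality: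 $p_i\le v_i(ALG_i)$; no positive transfers: $p_i\ge0$. Social cost $\pi(\vec S)=C(\vec S)+\sum_i[v_i(M_i)-v_i(S_i)]$; $n$-approximation: $\pi(\overrightarrow{ALG})\le n\min_{\vec S}\pi(\vec S)$ for all profiles. Supermodular $v$: $v(S)+v(T)\le v(S\cup T)+v(S\cap T)$; submodular $C$: $C(S)+C(T)\ge C(S\cup T)+C(S\cap T)$. Symmetric valuation: $v_i(S)=v_i(T)$ whenever $|S|=|T|$. Player-wise symmetric cost: $C(\vec S)=C(\vec T)$ whenever $|S_i|=|T_i|$ for all $i$. *)

(* Real-valued costs/valuations are taken in an arbitrary
   realFieldType R (the statement is purely order-algebraic). *)
From HB Require Import structures.
From mathcomp Require Import all_boot all_order all_algebra.
Set Implicit Arguments. Unset Strict Implicit. Unset Printing Implicit Defensive.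
Import Order.TTheory GRing.Theory Num.Theory.
Local Open Scope ring_scope.

Section Mech.
Variables (R : realFieldType) (n : nat) (M : finType) (own : M -> 'I_n).

Definition Mi (i : 'I_n) : {set M} := [set x | own x == i].

Definition is_cost (C : {set M} -> R) : Prop :=
  [/\ C set0 = 0,
      (forall S, 0 <= C S) &
      (forall S T : {set M}, S \subset T -> C S <= C T)].

(* valuation of player i on 2^{M_i} (values outside 2^{M_i} are never used) *)
Definition is_valuation (i : 'I_n) (vi : {set M} -> R) : Prop :=
  [/\ vi set0 = 0,
      (forall S : {set M}, S \subset Mi i -> 0 <= vi S) &
      (forall S T : {set M}, S \subset T -> T \subset Mi i -> vi S <= vi T)].

Definition supermodular_val (i : 'I_n) (vi : {set M} -> R) : Prop :=
  forall S T : {set M}, S \subset Mi i -> T \subset Mi i ->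
    vi S + vi T <= vi (S :|: T) + vi (S :&: T).

Definition submodular_cost (C : {set M} -> R) : Prop :=
  forall S T : {set M}, C S + C T >= C (S :|: T) + C (S :&: T).

Definition symmetric_val (i : 'I_n) (vi : {set M} -> R) : Prop :=
  forall S T : {set M}, S \subset Mi i -> T \subset Mi i ->
    #|S| = #|T| -> vi S = vi T.

Definition playerwise_symmetric_cost (C : {set M} -> R) : Prop :=
  forall S T : {set M}, (forall i, #|S :&: Mi i| = #|T :&: Mi i|) -> C S = C T.

(* allocation of players 1..k (0-based: players j with j < k) *)
Definition prefix (alg : 'I_n -> {set M}) (k : nat) : {set M} :=
  \bigcup_(j : 'I_n | (j < k)%N) alg j.

Definition allocation (alg : 'I_n -> {set M}) : {set M} := prefix alg n.

(* (alg, p) is a possible output of the Sequential Mechanism on the reported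
   valuations b (ties among maximum-cardinality maximizers broken arbitrarily). *)
Definition seq_outcome (C : {set M} -> R) (b : 'I_n -> {set M} -> R)
    (alg : 'I_n -> {set M}) (p : 'I_n -> R) : Prop :=
  forall i : 'I_n,
    let A := prefix alg i in
    let u := fun S => b i S - (C (A :|: S) - C A) in
    [/\ alg i \subset Mi i,
        (forall S : {set M}, S \subset Mi i -> u S <= u (alg i)),
        (forall S : {set M}, S \subset Mi i -> u S = u (alg i) -> (#|S| <= #|alg i|)%N) &
        p i = C (A :|: alg i) - C A].

Definition social_cost (C : {set M} -> R) (v : 'I_n -> {set M} -> R)
    (S : {set M}) : R :=
  C S + \sum_(i < n) (v i (Mi i) - v i (S :&: Mi i)).

Definition groupstrategyproof (C : {set M} -> R) (v : 'I_n -> {set M} -> R)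
    : Prop :=
  forall (K : {set 'I_n}) (b : 'I_n -> {set M} -> R),
    (forall i, i \notin K -> b i = v i) ->
    (forall i, i \in K -> is_valuation i (b i)) ->
    forall alg p alg' p',
      seq_outcome C v alg p -> seq_outcome C b alg' p' ->
      (forall i, i \in K -> v i (alg i) - p i <= v i (alg' i) - p' i) ->
      (forall i, i \in K -> v i (alg i) - p i = v i (alg' i) - p' i).

End Mech.

From Pilot Require Import Defs.
From HB Require Import structures.
From mathcomp Require Import all_boot all_order all_algebra.
From mathcomp Require Import lra.
Set Implicit Arguments. Unset Strict Implicit. Unset Printing Implicit Defensive.
Import Order.TTheory GRing.Theory Num.Theory.
Local Open Scope ring_scope.

(* The prices telescope to the cost of the final allocation, and a player's
   utility is nonnegative because the empty bundle is available.

   For group-strategyproofness, compare the run on a coalition's misreport with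
   the truthful run.  By induction over the players, the prefix allocated in the
   deviating run is interchangeable, for the cost of any set of later items, with
   a subset B of the truthful prefix A.  In the induction step, player i's
   deviating bundle Z can in turn be replaced by a subset of her truthful bundle
   X.  Because B \subset A, submodularity makes marginal costs after B at
   least those after A; with supermodular valuations this forces X :|: Z to
   maximise i's utility too, so Z \subset X by the maximum cardinality of X;
   with symmetric data it forces |Z| <= |X|, and any subset of X of size |Z|
   costs the same as Z.  Since B \subset A, each coalition member faces
   larger marginal costs than in the truthful run and cannot gain.

   Finally, submodularity gives C (A :|: T) - C A <= C T, so each player's share
   of the social cost is at most the optimal social cost. *)

Section SequentialMechanism.
Variables (R : realFieldType) (n : nat) (M : finType) (own : M -> 'I_n).
Variable C : {set M} -> R.
Implicit Types (A B P Q S T U V W X Y Z : {set M}) (vi : {set M} -> R).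

Definition items_from (k : nat) : {set M} := [set x | (k <= own x)%N].

Lemma Mi_sub_items_from (i : 'I_n) : Mi own i \subset items_from i.
Proof. by apply/subsetP => x; rewrite !inE => /eqP ->. Qed.

Lemma items_fromS_subC (i : 'I_n) : items_from i.+1 \subset ~: Mi own i.
Proof. by apply/subsetP => x; rewrite !inE; apply: contraTneq => ->; rewrite ltnn. Qed.

Lemma items_fromS_sub k : items_from k.+1 \subset items_from k.
Proof. by apply/subsetP => x; rewrite !inE; apply: ltnW. Qed.

Section Prefix.
Variable alg : 'I_n -> {set M}.

Lemma prefix0 : Defs.prefix alg 0 = set0.
Proof. by apply/setP => x; rewrite inE; apply/bigcupP => -[]. Qed.

Lemma prefixS (i : 'I_n) : Defs.prefix alg i.+1 = Defs.prefix alg i :|: alg i.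
Proof.
apply/setP => x; rewrite inE; apply/bigcupP/orP.
- case=> j; rewrite ltnS leq_eqVlt => /predU1P[/val_inj -> | ji] xj; first by right.
  by left; apply/bigcupP; exists j.
- by case=> [/bigcupP[j ji xj] | xi]; [exists j => //; apply: ltnW | exists i].
Qed.

Hypothesis alg_sub : forall j, alg j \subset Mi own j.

Lemma prefix_sub_items_fromC k : Defs.prefix alg k \subset ~: items_from k.
Proof.
apply/subsetP => x /bigcupP[j jk xj].
by move: (subsetP (alg_sub j) x xj); rewrite !inE -ltnNge => /eqP ->.
Qed.

Lemma prefix_subC_Mi (i : 'I_n) : Defs.prefix alg i \subset ~: Mi own i.
Proof.
by apply: subset_trans (prefix_sub_items_fromC i) _; rewrite setCS Mi_sub_items_from.
Qed.

Lemma allocationIMi (i : 'I_n) : allocation alg :&: Mi own i = alg i.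
Proof.
apply/setP => x; rewrite inE; apply/andP/idP => [[/bigcupP[j _ xj] xi] | xi].
  by move: (subsetP (alg_sub j) x xj) xi; rewrite !inE => /eqP-> /eqP<-.
by split; [apply/bigcupP; exists i | apply: subsetP (alg_sub i) x xi].
Qed.

End Prefix.

Definition utility (A : {set M}) (vi : {set M} -> R) (S : {set M}) : R :=
  vi S - (C (A :|: S) - C A).

Definition best_response (A : {set M}) (i : 'I_n) (vi : {set M} -> R) (X : {set M}) :=
  [/\ X \subset Mi own i,
      forall S : {set M}, S \subset Mi own i -> utility A vi S <= utility A vi X &
      forall S : {set M}, S \subset Mi own i -> utility A vi S = utility A vi X -> (#|S| <= #|X|)%N].

Definition best_response_of A (i : 'I_n) vi : {set M} :=
  let X0 := [arg max_(S > set0 | S \subset Mi own i) utility A vi S]%O in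
  [arg max_(S > X0 | (S \subset Mi own i) && (utility A vi S == utility A vi X0)) #|S|]%N.

Lemma best_response_ofP A (i : 'I_n) vi : best_response A i vi (best_response_of A i vi).
Proof.
rewrite /best_response_of; case: arg_maxP => [| X0 X0i maxX0]; first exact: sub0set.
case: arg_maxnP => [| X /andP[Xi /eqP XX0] maxX]; first by rewrite X0i eqxx.
split=> // [S Si | S Si SX]; first by rewrite XX0; apply: maxX0.
by apply: maxX; rewrite Si SX XX0 eqxx.
Qed.

Fixpoint seq_prefix (b : 'I_n -> {set M} -> R) (k : nat) : {set M} :=
  if k is k'.+1 then
    seq_prefix b k' :|:
      (if insub k' is Some i then best_response_of (seq_prefix b k') i (b i) else set0)
  else set0.

Definition seq_alloc b (i : 'I_n) : {set M} := best_response_of (seq_prefix b i) i (b i).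

Definition seq_price b (i : 'I_n) : R :=
  C (seq_prefix b i :|: seq_alloc b i) - C (seq_prefix b i).

Lemma prefix_seq_alloc b k : (k <= n)%N -> Defs.prefix (seq_alloc b) k = seq_prefix b k.
Proof.
elim: k => [_ | k IH kn]; first exact: prefix0.
by rewrite (prefixS _ (Ordinal kn)) IH ?(ltnW kn) //= insubT.
Qed.

Lemma seq_outcome_seq_alloc b : seq_outcome own C b (seq_alloc b) (seq_price b).
Proof.
move=> i; rewrite prefix_seq_alloc ?(ltnW (ltn_ord i)) //.
by have [? ? ?] := best_response_ofP (seq_prefix b i) i (b i).
Qed.

Lemma seq_outcome_budget_balanced b alg p :
  C set0 = 0 -> seq_outcome own C b alg p -> \sum_(i < n) p i = C (allocation alg).
Proof.
move=> C0 o; have := telescope_sumr (fun k => C (Defs.prefix alg k)) (leq0n n).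
rewrite big_mkord prefix0 C0 subr0 => <-; apply: eq_bigr => i _.
by have [_ _ _ ->] := o i; rewrite prefixS.
Qed.

Lemma seq_outcome_best b alg p (i : 'I_n) :
  seq_outcome own C b alg p -> best_response (Defs.prefix alg i) i (b i) (alg i).
Proof. by move=> o; have [] := o i. Qed.

Lemma seq_outcome_sub b alg p :
  seq_outcome own C b alg p -> forall j, alg j \subset Mi own j.
Proof. by move=> o j; have [] := o j. Qed.

Lemma seq_outcome_net_utility b alg p vi (i : 'I_n) :
  seq_outcome own C b alg p ->
  vi (alg i) - p i = utility (Defs.prefix alg i) vi (alg i).
Proof. by move=> o; have [_ _ _ ->] := o i. Qed.

Definition cost_equiv_on (U P Q : {set M}) :=
  forall S : {set M}, S \subset U -> C (P :|: S) = C (Q :|: S).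

Lemma utility_cost_equiv U P Q vi S :
  cost_equiv_on U P Q -> S \subset U -> utility P vi S = utility Q vi S.
Proof.
move=> PQ SU; rewrite /utility PQ //.
by have := PQ set0 (sub0set U); rewrite !setU0 => ->.
Qed.

Lemma cost_equiv_onU U V W P Q Y Z :
  cost_equiv_on U P Q -> cost_equiv_on V Z Y ->
  Z \subset U -> W \subset U -> Q \subset V -> W \subset V ->
  cost_equiv_on W (P :|: Z) (Q :|: Y).
Proof.
move=> PQ ZY ZU WU QV WV S SW.
rewrite -setUA PQ; last by rewrite subUset ZU (subset_trans SW WU).
rewrite setUCA ZY; last by rewrite subUset QV (subset_trans SW WV).
by rewrite setUCA setUA.
Qed.

Lemma playerwise_symmetric_cost_equiv (i : 'I_n) Y Z :
  playerwise_symmetric_cost own C -> Y \subset Mi own i -> Z \subset Mi own i ->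
  #|Y| = #|Z| -> cost_equiv_on (~: Mi own i) Y Z.
Proof.
move=> symC Yi Zi YZ S Si; apply: symC => j; rewrite !setIUl.
have [<- | ji] := eqVneq i j.
  have /eqP -> : S :&: Mi own i == set0 by rewrite setI_eq0 disjoints_subset.
  by rewrite !setU0 (setIidPl Yi) (setIidPl Zi).
have Mi_disj (T : {set M}) : T \subset Mi own i -> T :&: Mi own j = set0.
  move=> Ti; apply/setP => x; rewrite !inE; apply/negbTE/andP => -[xT /eqP xj].
  have /[!inE] /eqP xi := subsetP Ti x xT.
  by rewrite -xj xi eqxx in ji.
by rewrite (Mi_disj Y) ?(Mi_disj Z).
Qed.

Lemma exists_subset_card X k :
  (k <= #|X|)%N -> exists2 Y : {set M}, Y \subset X & #|Y| = k.
Proof.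
case/card_geqP => s [s_uniq <- sX]; exists [set x in s].
  by apply/subsetP => x; rewrite inE => /sX.
by rewrite cardsE; apply/card_uniqP.
Qed.

Lemma exists_card_between X Q k :
  X \subset Q -> (#|X| <= k)%N -> (k <= #|Q|)%N ->
  exists Y : {set M}, [/\ X \subset Y, Y \subset Q & #|Y| = k].
Proof.
move=> XQ Xk kQ.
have [W WQX cardW] : exists2 W : {set M}, W \subset Q :\: X & #|W| = (k - #|X|)%N.
  by apply: exists_subset_card; rewrite cardsDS // leq_sub2r.
exists (X :|: W); split; first exact: subsetUl.
  by rewrite subUset XQ (subset_trans WQX (subsetDl Q X)).
have /eqP XW0 : X :&: W == set0.
  by rewrite setI_eq0 disjoints_subset subsetC (subset_trans WQX (subsetDr Q X)).
by rewrite cardsU XW0 cards0 subn0 cardW subnKC.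
Qed.

Lemma utility_symmetric A (i : 'I_n) vi Y Z :
  playerwise_symmetric_cost own C -> symmetric_val own i vi ->
  A \subset ~: Mi own i -> Y \subset Mi own i -> Z \subset Mi own i -> #|Y| = #|Z| ->
  utility A vi Y = utility A vi Z.
Proof.
move=> symC symv Ai Yi Zi YZ; rewrite /utility (symv Y Z) //.
by rewrite ![A :|: _]setUC (playerwise_symmetric_cost_equiv symC Yi Zi YZ Ai).
Qed.

Section Submodular.
Hypothesis submodC : submodular_cost C.

Lemma marginal_antitone A B S T :
  B \subset A -> S \subset T -> T \subset ~: A ->
  C (A :|: T) - C (A :|: S) <= C (B :|: T) - C (B :|: S).
Proof.
move=> BA ST TA; have := submodC (B :|: T) (A :|: S).
rewrite setUACA (setUidPr BA) (setUidPl ST) setIUl !setIUr.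
have /eqP -> : T :&: A == set0 by rewrite setI_eq0 disjoints_subset.
rewrite (setIidPl BA) (setIidPr ST) set0U (setUidPl (subsetIl B S)); lra.
Qed.

Lemma utility_increment_mono A B vi S T :
  B \subset A -> S \subset T -> T \subset ~: A ->
  utility B vi T - utility B vi S <= utility A vi T - utility A vi S.
Proof. by move=> BA ST TA; have := marginal_antitone BA ST TA; rewrite /utility; lra. Qed.

Lemma utility_mono A B vi S :
  B \subset A -> S \subset ~: A -> utility B vi S <= utility A vi S.
Proof.
move=> BA SA; have := utility_increment_mono vi BA (sub0set S) SA.
rewrite /utility !setU0; lra.
Qed.

Lemma utility_supermodular A (i : 'I_n) vi X Z :
  supermodular_val own i vi -> X \subset Mi own i -> Z \subset Mi own i ->
  utility A vi X + utility A vi Z <= utility A vi (X :|: Z) + utility A vi (X :&: Z).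
Proof.
move=> supv Xi Zi; have := supv X Z Xi Zi; have := submodC (A :|: X) (A :|: Z).
rewrite setUACA setUid -setUIr /utility; lra.
Qed.

Section BestResponse.
Variables (A : {set M}) (i : 'I_n) (vi : {set M} -> R) (X : {set M}).
Hypotheses (A_Mi : A \subset ~: Mi own i) (bestX : best_response A i vi X).

Let Mi_A : Mi own i \subset ~: A. Proof. by rewrite subsetC. Qed.

Lemma best_response_dominated B Z :
  B \subset A -> Z \subset Mi own i -> utility A vi X <= utility B vi Z ->
  utility A vi Z = utility A vi X.
Proof.
have [_ maxX _] := bestX => BA Zi XZ; apply/le_anti; rewrite maxX //=.
exact: le_trans XZ (utility_mono _ _ (subset_trans Zi Mi_A)).
Qed.

Lemma best_response_supermodular_sub Z :
  supermodular_val own i vi -> Z \subset Mi own i ->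
  utility A vi (X :&: Z) <= utility A vi Z -> Z \subset X.
Proof.
have [Xi maxX cardX] := bestX => supv Zi XZ_Z.
have XZi : X :|: Z \subset Mi own i by rewrite subUset Xi.
have XZ_eq : utility A vi (X :|: Z) = utility A vi X.
  apply/le_anti; rewrite maxX //=.
  by have := utility_supermodular A supv Xi Zi; lra.
have /eqP -> : X == X :|: Z by rewrite eqEcard subsetUl cardX.
exact: subsetUr.
Qed.

Lemma best_response_card B Z :
  playerwise_symmetric_cost own C -> symmetric_val own i vi ->
  B \subset A -> Z \subset Mi own i ->
  (forall S, S \subset Mi own i -> utility B vi S <= utility B vi Z) ->
  (#|Z| <= #|X|)%N.
Proof.
have [Xi maxX cardX] := bestX => symC symv BA Zi maxZ.
rewrite leqNgt; apply/negP => ltXZ.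
have [Y [XY Yi cardY]] := exists_card_between Xi (ltnW ltXZ) (subset_leq_card Zi).
have YZ : utility B vi Y = utility B vi Z.
  exact: utility_symmetric symC symv (subset_trans BA A_Mi) Yi Zi cardY.
have YX : utility A vi Y = utility A vi X.
  apply/le_anti; rewrite maxX //=; have := maxZ X Xi.
  by have := utility_increment_mono vi BA XY (subset_trans Yi Mi_A); lra.
by have := cardX Y Yi YX; rewrite cardY leqNgt ltXZ.
Qed.

(* [Z] is the choice of player [i] when the earlier players deviated, with
   [B] cost-equivalent to their allocation: either [i] reports truthfully
   (left), or [i] belongs to the coalition and gains at least as much (right). *)
Lemma best_response_replaceable B Z :
  supermodular_val own i vi \/ (playerwise_symmetric_cost own C /\ symmetric_val own i vi) ->
  B \subset A -> Z \subset Mi own i ->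
  (forall S, S \subset Mi own i -> utility B vi S <= utility B vi Z) \/
    utility A vi X <= utility B vi Z ->
  exists2 Y : {set M}, Y \subset X & cost_equiv_on (~: Mi own i) Z Y.
Proof.
have [Xi maxX cardX] := bestX => hyp BA Zi response.
have ZX_dom := best_response_dominated BA Zi.
case: hyp => [supv | [symC symv]].
  exists Z => //; apply: best_response_supermodular_sub => //.
  case: response => [maxZ | XZ]; last by rewrite ZX_dom // maxX // subIset ?Xi.
  have := maxZ _ (subset_trans (subsetIr X Z) Zi).
  by have := utility_increment_mono vi BA (subsetIr X Z) (subset_trans Zi Mi_A); lra.
have ZX : (#|Z| <= #|X|)%N.
  case: response => [maxZ | XZ]; first exact: best_response_card symC symv BA Zi maxZ.
  by apply: cardX Zi (ZX_dom XZ).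
have [Y YX YZ] := exists_subset_card ZX.
by exists Y => //; apply: playerwise_symmetric_cost_equiv (subset_trans YX Xi) _.
Qed.

End BestResponse.

Section Deviation.
Variables (v b : 'I_n -> {set M} -> R) (K : {set 'I_n}).
Variables (alg alg' : 'I_n -> {set M}) (p p' : 'I_n -> R).
Hypothesis hyp : forall i, supermodular_val own i (v i) \/
                           (playerwise_symmetric_cost own C /\ symmetric_val own i (v i)).
Hypothesis truthful : forall i, i \notin K -> b i = v i.
Hypotheses (o : seq_outcome own C v alg p) (o' : seq_outcome own C b alg' p').
Hypothesis gainK : forall i, i \in K -> v i (alg i) - p i <= v i (alg' i) - p' i.

Lemma deviation_prefix_equivS (i : 'I_n) B :
  B \subset Defs.prefix alg i -> cost_equiv_on (items_from i) (Defs.prefix alg' i) B ->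
  exists2 B' : {set M}, B' \subset Defs.prefix alg i.+1 &
              cost_equiv_on (items_from i.+1) (Defs.prefix alg' i.+1) B'.
Proof.
move=> BA A'B; rewrite !prefixS.
have bestX := seq_outcome_best i o; have [Zi maxZ _] := seq_outcome_best i o'.
have A_Mi := prefix_subC_Mi (seq_outcome_sub o) i.
have later T : T \subset Mi own i -> T \subset items_from i.
  by move=> Ti; apply: subset_trans Ti (Mi_sub_items_from i).
have equivB T : T \subset Mi own i -> utility (Defs.prefix alg' i) (v i) T = utility B (v i) T.
  by move=> Ti; apply: utility_cost_equiv A'B (later _ Ti).
have response : (forall S, S \subset Mi own i -> utility B (v i) S <= utility B (v i) (alg' i)) \/
    utility (Defs.prefix alg i) (v i) (alg i) <= utility B (v i) (alg' i).
  have [iK | iNK] := boolP (i \in K); [right | left].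
    by rewrite -equivB // -!(seq_outcome_net_utility _ _ o, seq_outcome_net_utility _ _ o') gainK.
  by move=> S Si; rewrite -!equivB // -(truthful iNK); apply: maxZ.
have [Y YX ZY] := best_response_replaceable A_Mi bestX (hyp i) BA Zi response.
exists (B :|: Y); first exact: setUSS.
apply: cost_equiv_onU A'B ZY (later _ Zi) (items_fromS_sub i) _ (items_fromS_subC i).
exact: subset_trans BA A_Mi.
Qed.

Lemma deviation_prefix_equiv k : (k <= n)%N ->
  exists2 B : {set M}, B \subset Defs.prefix alg k &
                       cost_equiv_on (items_from k) (Defs.prefix alg' k) B.
Proof.
elim: k => [_ | k IH kn].
  by exists set0; rewrite ?prefix0 // => S _; rewrite prefix0.
have [B BA A'B] := IH (ltnW kn).
exact: deviation_prefix_equivS (Ordinal kn) B BA A'B.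
Qed.

End Deviation.

Lemma seq_mechanism_groupstrategyproof v :
  (forall i, supermodular_val own i (v i) \/
             (playerwise_symmetric_cost own C /\ symmetric_val own i (v i))) ->
  groupstrategyproof own C v.
Proof.
move=> hyp K b truthful _ alg p alg' p' o o' gainK i iK.
have [B BA A'B] := deviation_prefix_equiv hyp truthful o o' gainK (ltnW (ltn_ord i)).
have [_ maxX _] := seq_outcome_best i o; have [Zi _ _] := seq_outcome_best i o'.
have Z_later : alg' i \subset items_from i := subset_trans Zi (Mi_sub_items_from i).
apply/le_anti; rewrite gainK //= (seq_outcome_net_utility _ _ o) (seq_outcome_net_utility _ _ o').
rewrite (utility_cost_equiv _ A'B Z_later); apply: le_trans (maxX _ Zi).
apply: utility_mono BA (subset_trans Zi _).
by rewrite subsetC; apply: prefix_subC_Mi (seq_outcome_sub o) i.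
Qed.

Lemma seq_outcome_social_cost v alg p S :
  is_cost C -> (forall i, is_valuation own i (v i)) -> seq_outcome own C v alg p ->
  social_cost own C v (allocation alg) <= n%:R * social_cost own C v S.
Proof.
move=> [C0 _ monoC] val o.
have per_player i : p i + (v i (Mi own i) - v i (alg i)) <= social_cost own C v S.
  have [_ maxX _] := seq_outcome_best i o.
  have Ti : S :&: Mi own i \subset Mi own i := subsetIr S _.
  have := maxX _ Ti; rewrite -(seq_outcome_net_utility _ _ o).
  have Mi_A : Mi own i \subset ~: Defs.prefix alg i.
    by rewrite subsetC (prefix_subC_Mi (seq_outcome_sub o)).
  have := utility_mono (v i) (sub0set (Defs.prefix alg i)) (subset_trans Ti Mi_A).
  rewrite /utility set0U C0.
  have := monoC _ _ (subsetIl S (Mi own i)).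
  have : v i (Mi own i) - v i (S :&: Mi own i) <=
         \sum_(j < n) (v j (Mi own j) - v j (S :&: Mi own j)).
    rewrite (bigD1 i) //= lerDl; apply: sumr_ge0 => j _.
    by have [_ _ monov] := val j; rewrite subr_ge0 monov ?subsetIr.
  rewrite /social_cost; lra.
set OPT := social_cost own C v S.
rewrite /social_cost -(seq_outcome_budget_balanced C0 o) -big_split /=.
have -> : n%:R * OPT = \sum_(i < n) OPT by rewrite sumr_const card_ord mulr_natl.
apply: ler_sum => i _.
by rewrite allocationIMi; [apply: per_player | apply: seq_outcome_sub o].
Qed.

End Submodular.

Lemma seq_outcome_individually_rational v alg p (i : 'I_n) :
  v i set0 = 0 -> seq_outcome own C v alg p -> p i <= v i (alg i).
Proof.
move=> v0 o; have [_ maxX _] := seq_outcome_best i o.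
have := maxX _ (sub0set _); rewrite -(seq_outcome_net_utility _ _ o) /utility setU0 v0; lra.
Qed.

Lemma seq_outcome_price_ge0 b alg p (i : 'I_n) :
  (forall S T, S \subset T -> C S <= C T) -> seq_outcome own C b alg p -> 0 <= p i.
Proof. by move=> monoC o; have [_ _ _ ->] := o i; rewrite subr_ge0 monoC ?subsetUl. Qed.

End SequentialMechanism.

Theorem theorem7p1 (R : realFieldType) (n : nat) (M : finType)
    (own : M -> 'I_n) (C : {set M} -> R) (v : 'I_n -> {set M} -> R) :
  is_cost C ->
  (forall i, is_valuation own i (v i)) ->
  (submodular_cost C /\ (forall i, supermodular_val own i (v i))) \/
  (submodular_cost C /\ playerwise_symmetric_cost own C /\
     (forall i, symmetric_val own i (v i))) ->
  [/\ (exists alg p, seq_outcome own C v alg p),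
      groupstrategyproof own C v &
      forall alg p, seq_outcome own C v alg p ->
        [/\ \sum_(i < n) p i = C (allocation alg),
            (forall S : {set M},
               social_cost own C v (allocation alg) <= n%:R * social_cost own C v S),
            (forall i, p i <= v i (alg i)) &
            (forall i, 0 <= p i)]].
Proof.
move=> costC val hyp; have [C0 _ monoC] := costC.
have submodC : submodular_cost C by case: hyp => -[].
have hyp_i i : supermodular_val own i (v i) \/
               (playerwise_symmetric_cost own C /\ symmetric_val own i (v i)).
  by case: hyp => [[_ supv] | [_ [symC symv]]]; [left | right].
split.
- by exists (seq_alloc own C v), (seq_price own C v); apply: seq_outcome_seq_alloc.
- exact: seq_mechanism_groupstrategyproof.
- move=> alg p o; split.
  + exact: seq_outcome_budget_balanced C0 o.
  + by move=> S; apply: seq_outcome_social_cost.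
  + by move=> i; have [v0 _ _] := val i; apply: seq_outcome_individually_rational v0 o.
  + by move=> i; apply: seq_outcome_price_ge0 monoC o.
Qed.
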